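(* Let $L$ be a completely regular frame. Then $\overline{\mathrm{H}}(L)$ (with the inclusion $\overline{\mathrm{C}}(L)\subseteq\overline{\mathrm{H}}(L)$) is the Dedekind–MacNeille completion of $\overline{\mathrm{C}}(L)$.
   Context: $\mathbb{Q}$ is the rationals; $a^\ast$ is the pseudocomplement. The frame $\mathfrak{L}(\overline{\mathbb{IR}})$ is presented by generators $(r,\textsf{---})$, $(\textsf{---},s)$ ($r,s\in\mathbb{Q}$) subject to (r1) $(r,\textsf{---})\wedge(\textsf{---},s)=0$ whenever $r\ge s$; (r3) $(r,\textsf{---})=\bigvee_{s>r}(s,\textsf{---})$; (r4) $(\textsf{---},s)=\bigvee_{r<s}(\textsf{---},r)$. $\overline{\mathrm{IC}}(L)$ is the set of frame homomorphisms $\mathfrak{L}(\overline{\mathbb{IR}})\to L$, ordered by $f\le g$ iff $f(r,\textsf{---})\le g(r,\textsf{---})$ and $g(\textsf{---},s)\le f(\textsf{---},s)$ for all $r,s$. $\overline{\mathrm{C}}(L)$ (extended continuous real functions) is the subposet of those $f$ with $f(r,\textsf{---})\vee f(\textsf{---},s)=1$ whenever $r<s$ (equivalently, homomorphisms from the frame of extended reals). $\overline{\mathrm{H}}(L)$ is the subposet of $f\in\overline{\mathrm{IC}}(L)$ with $f(r,\textsf{---})^\ast\le f(\textsf{---},s)$ and $f(\textsf{---},s)^\ast\le f(r,\textsf{---})$ for all $r<s$. A Dedekind–MacNeille completion of a poset $P$ is a join- and meet-dense order embedding of $P$ into a complete lattice. A frame is completely regular if every $a$ is the join of the elements completely below it.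 *)

From mathcomp Require Import all_boot all_order all_algebra.
Set Implicit Arguments.
Unset Strict Implicit.
Unset Printing Implicit Defensive.
Import Order.TTheory GRing.Theory Num.Theory.

Record frame := Frame {
  fcarrier :> Type;
  fle : fcarrier -> fcarrier -> Prop;
  fjoin : (fcarrier -> Prop) -> fcarrier;
  fmeet : fcarrier -> fcarrier -> fcarrier;
  ftop : fcarrier;
  fbot : fcarrier;
  fle_refl : forall a, fle a a;
  fle_trans : forall a b c, fle a b -> fle b c -> fle a c;
  fle_antisym : forall a b, fle a b -> fle b a -> a = b;
  fjoin_ub : forall (S : fcarrier -> Prop) a, S a -> fle a (fjoin S);
  fjoin_least : forall (S : fcarrier -> Prop) b,
      (forall a, S a -> fle a b) -> fle (fjoin S) b;
  fmeet_lb_l : forall a b, fle (fmeet a b) a;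
  fmeet_lb_r : forall a b, fle (fmeet a b) b;
  fmeet_glb : forall a b c, fle c a -> fle c b -> fle c (fmeet a b);
  ftop_max : forall a, fle a ftop;
  fbot_min : forall a, fle fbot a;
  fdistr : forall a (S : fcarrier -> Prop),
      fmeet a (fjoin S) = fjoin (fun x => exists2 s, S s & x = fmeet a s)
}.

Section FrameOps.
Variable L : frame.

Definition fjoin2 (a b : L) : L := fjoin (fun x => x = a \/ x = b).

Definition pcompl (a : L) : L := fjoin (fun x => fmeet x a = fbot L).

Definition rather_below (a b : L) : Prop := fjoin2 (pcompl a) b = ftop L.

Definition completely_below (a b : L) : Prop :=
  exists c : rat -> L, c 0%R = a /\ c 1%R = b /\
    (forall p q : rat, (0 <= p)%R -> (p < q)%R -> (q <= 1)%R ->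
       rather_below (c p) (c q)).

Definition completely_regular : Prop :=
  forall a : L, a = fjoin (fun b => completely_below b a).

(** * IC-bar(L): frame homomorphisms L(IR-bar) -> L, given (by the universal
    property of the presentation) by their values on the generators
    (r,-) ↦ lo r and (-,s) ↦ up s, subject to the relations (r1),(r3),(r4). *)
Record ICbar := MkICbar {
  lo : rat -> L;
  up : rat -> L;
  ic_r1 : forall r s : rat, (s <= r)%R -> fmeet (lo r) (up s) = fbot L;
  ic_r3 : forall r : rat, lo r = fjoin (fun x => exists2 s : rat, (r < s)%R & x = lo s);
  ic_r4 : forall s : rat, up s = fjoin (fun x => exists2 r : rat, (r < s)%R & x = up r)
}.

Definition ICle (f g : ICbar) : Prop :=
  (forall r, fle (lo f r) (lo g r)) /\ (forall s, fle (up g s) (up f s)).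

Definition inCbar (f : ICbar) : Prop :=
  forall r s : rat, (r < s)%R -> fjoin2 (lo f r) (up f s) = ftop L.

Definition inHbar (f : ICbar) : Prop :=
  forall r s : rat, (r < s)%R ->
    fle (pcompl (lo f r)) (up f s) /\ fle (pcompl (up f s)) (lo f r).

End FrameOps.

Section DM.
Variables (T : Type) (le : T -> T -> Prop).

Definition is_lub_in (Q S : T -> Prop) (x : T) : Prop :=
  Q x /\ (forall y, S y -> le y x) /\
  (forall z, Q z -> (forall y, S y -> le y z) -> le x z).

Definition is_glb_in (Q S : T -> Prop) (x : T) : Prop :=
  Q x /\ (forall y, S y -> le x y) /\
  (forall z, Q z -> (forall y, S y -> le z y) -> le z x).

Definition complete_lattice_on (Q : T -> Prop) : Prop :=
  forall S : T -> Prop, (forall y, S y -> Q y) -> exists x, is_lub_in Q S x.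

(** Q (with the inclusion of P into Q, an order embedding since both carry
    the restriction of le) is the Dedekind–MacNeille completion of P:
    Q is a complete lattice, P ⊆ Q, and P is join- and meet-dense in Q. *)
Definition is_DM_completion (P Q : T -> Prop) : Prop :=
  (forall x, P x -> Q x) /\
  complete_lattice_on Q /\
  (forall x, Q x -> is_lub_in Q (fun y => P y /\ le y x) x) /\
  (forall x, Q x -> is_glb_in Q (fun y => P y /\ le x y) x).
End DM.

From mathcomp Require Import all_boot all_order all_algebra.
From mathcomp Require Import lra.
Set Implicit Arguments.
Unset Strict Implicit.
Unset Printing Implicit Defensive.
Import Order.TTheory GRing.Theory Num.Theory.

(* For h in H-bar(L) the upper half is determined by the lower one,
   h(-,s) = \/_{r<s} h(r,-)^*, so joins in H-bar(L) can be built from the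
   pointwise joins of the lower halves followed by two pseudocomplements.
   For density, if a is completely below h(s,-) and r < s, the family
   interpolating between a and h(s,-), reindexed by the rationals, is a
   scale whose continuous function c satisfies c <= h and a <= c(r,-);
   by complete regularity such a join up to h(s,-). Meet-density follows
   from join-density through the order-reversing symmetry
   (r,-) <-> (-,-r), which preserves both C-bar(L) and H-bar(L). *)

Local Open Scope ring_scope.

Lemma ltr_dense (R : numFieldType) (r s : R) : r < s -> exists2 m, r < m & m < s.
Proof. by move=> /midf_lt[]; exists ((r + s) / 2). Qed.

Section Squash.
Variables (R : realFieldType) (m : R).

Definition squash (t : R) : R := 1 - (1 + m - t)^-1.

Lemma squash_gt0 t : t < m -> 0 < squash t.
Proof. by move=> ltm; rewrite /squash subr_gt0 invf_lt1; lra. Qed.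

Lemma squash_lt1 t : t < m -> squash t < 1.
Proof. by move=> ltm; rewrite /squash gtrBl invr_gt0; lra. Qed.

Lemma squash_decr p q : p < q -> q < m -> squash q < squash p.
Proof. by move=> lt_pq ltm; rewrite /squash ltrD2l ltrN2 ltf_pV2 ?posrE; lra. Qed.

End Squash.

Section FrameTheory.
Variable L : frame.
Implicit Types (a b c d x y z : L) (S : L -> Prop).

Lemma fle_bot x : fle x (fbot L) -> x = fbot L.
Proof. by move=> le_x0; apply: fle_antisym le_x0 (fbot_min _). Qed.

Lemma fle_fjoin S a b : S b -> fle a b -> fle a (fjoin S).
Proof. by move=> Sb le_ab; apply: fle_trans le_ab (fjoin_ub Sb). Qed.

Lemma fleI2 a b c d : fle a b -> fle c d -> fle (fmeet a c) (fmeet b d).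
Proof.
move=> le_ab le_cd; apply: fmeet_glb.
- exact: fle_trans (fmeet_lb_l _ _) le_ab.
- exact: fle_trans (fmeet_lb_r _ _) le_cd.
Qed.

Lemma fmeetC a b : fmeet a b = fmeet b a.
Proof.
by apply: fle_antisym; apply: fmeet_glb; exact: fmeet_lb_r || exact: fmeet_lb_l.
Qed.

Lemma fmeet_top a : fmeet a (ftop L) = a.
Proof.
apply: fle_antisym (fmeet_lb_l _ _) _.
by apply: fmeet_glb; [apply: fle_refl | apply: ftop_max].
Qed.

Lemma fmeet_fjoin_bot a S :
  (forall s, S s -> fmeet a s = fbot L) -> fmeet a (fjoin S) = fbot L.
Proof.
move=> meet0; rewrite fdistr; apply: fle_bot; apply: fjoin_least => _ [s Ss ->].
by rewrite meet0 //; apply: fle_refl.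
Qed.

Lemma fjoin2_least x y z : fle x z -> fle y z -> fle (fjoin2 x y) z.
Proof. by move=> le_xz le_yz; apply: fjoin_least => _ [->|->]. Qed.

Lemma fjoin2_ub_l x y : fle x (fjoin2 x y).
Proof. by apply: fjoin_ub; left. Qed.

Lemma fjoin2_ub_r x y : fle y (fjoin2 x y).
Proof. by apply: fjoin_ub; right. Qed.

Lemma fjoin2C x y : fjoin2 x y = fjoin2 y x.
Proof.
by apply: fle_antisym; apply: fjoin2_least; exact: fjoin2_ub_l || exact: fjoin2_ub_r.
Qed.

Lemma fjoin2_top_le x y z :
  fjoin2 x y = ftop L -> fmeet z x = fbot L -> fle z y.
Proof.
move=> xy1 zx0; rewrite -(fmeet_top z) -xy1 fdistr.
apply: fjoin_least => _ [_ [->|->] ->]; last exact: fmeet_lb_r.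
by rewrite zx0; apply: fbot_min.
Qed.

Lemma pcompl_max a b : fmeet b a = fbot L -> fle b (pcompl a).
Proof. exact: fjoin_ub. Qed.

Lemma fmeet_pcompl a : fmeet a (pcompl a) = fbot L.
Proof. by apply: fmeet_fjoin_bot => s; rewrite fmeetC. Qed.

Lemma fmeet_pcompl_le x y : fle x y -> fmeet x (pcompl y) = fbot L.
Proof.
move=> le_xy; apply: fle_bot; rewrite -(fmeet_pcompl y).
by apply: fleI2 le_xy (fle_refl _).
Qed.

Lemma pcompl_anti a b : fle a b -> fle (pcompl b) (pcompl a).
Proof. by move=> le_ab; apply: pcompl_max; rewrite fmeetC; apply: fmeet_pcompl_le. Qed.

Lemma pcompl_bot : pcompl (fbot L) = ftop L.
Proof.
apply: fle_antisym (ftop_max _) _; apply: pcompl_max.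
by apply: fle_bot; apply: fmeet_lb_r.
Qed.

Lemma pcompl_le_of_fjoin2 x y : fjoin2 x y = ftop L -> fle (pcompl x) y.
Proof. by move=> xy1; apply: fjoin2_top_le xy1 _; rewrite fmeetC fmeet_pcompl. Qed.

Lemma rather_below_le a b : rather_below a b -> fle a b.
Proof. by move=> ab; apply: fjoin2_top_le ab (fmeet_pcompl a). Qed.

Lemma rather_below_bot a : rather_below (fbot L) a.
Proof.
rewrite /rather_below pcompl_bot.
by apply: fle_antisym (ftop_max _) (fjoin2_ub_l _ _).
Qed.

Definition fjoin_gt (F : rat -> L) (r : rat) : L :=
  fjoin (fun x => exists2 q, r < q & x = F q).
Definition fjoin_lt (F : rat -> L) (s : rat) : L :=
  fjoin (fun x => exists2 q, q < s & x = F q).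

Implicit Types (F G : rat -> L).

Lemma fjoin_gt_ub F r q : r < q -> fle (F q) (fjoin_gt F r).
Proof. by move=> lt_rq; apply: fjoin_ub; exists q. Qed.

Lemma fjoin_lt_ub F s q : q < s -> fle (F q) (fjoin_lt F s).
Proof. by move=> lt_qs; apply: fjoin_ub; exists q. Qed.

Lemma fjoin_lt_le F G s :
  (forall q, fle (F q) (G q)) -> fle (fjoin_lt F s) (fjoin_lt G s).
Proof.
move=> le_FG; apply: fjoin_least => _ [q lt_qs ->].
exact: fle_trans (le_FG q) (fjoin_lt_ub G lt_qs).
Qed.

Lemma fjoin_gt_idem F r : fjoin_gt (fjoin_gt F) r = fjoin_gt F r.
Proof.
apply: fle_antisym; apply: fjoin_least => _ [q lt_rq ->].
- apply: fjoin_least => _ [p lt_qp ->].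
  exact: fjoin_gt_ub (lt_trans lt_rq lt_qp).
- have [m lt_rm lt_mq] := ltr_dense lt_rq.
  exact: fle_trans (fjoin_gt_ub F lt_mq) (fjoin_gt_ub _ lt_rm).
Qed.

Lemma fjoin_lt_idem F s : fjoin_lt (fjoin_lt F) s = fjoin_lt F s.
Proof.
apply: fle_antisym; apply: fjoin_least => _ [q lt_qs ->].
- apply: fjoin_least => _ [p lt_pq ->].
  exact: fjoin_lt_ub (lt_trans lt_pq lt_qs).
- have [m lt_qm lt_ms] := ltr_dense lt_qs.
  exact: fle_trans (fjoin_lt_ub F lt_qm) (fjoin_lt_ub _ lt_ms).
Qed.

Lemma fjoin_gt_opp F r : fjoin_gt (fun q => F (- q)) r = fjoin_lt F (- r).
Proof.
apply: fle_antisym; apply: fjoin_least => _ [q lt_q ->].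
- by apply: fjoin_lt_ub; rewrite ltrN2.
- by rewrite -[q]opprK; apply: (fjoin_gt_ub (fun q => F (- q))); rewrite ltrNr.
Qed.

Lemma fjoin_lt_opp F s : fjoin_lt (fun q => F (- q)) s = fjoin_gt F (- s).
Proof.
apply: fle_antisym; apply: fjoin_least => _ [q lt_q ->].
- by apply: fjoin_gt_ub; rewrite ltrN2.
- by rewrite -[q]opprK; apply: (fjoin_lt_ub (fun q => F (- q))); rewrite ltrNl.
Qed.

End FrameTheory.

Section ICbarTheory.
Variable L : frame.
Implicit Types f g h z : ICbar L.

Lemma lo_fjoin_gt f r : lo f r = fjoin_gt (lo f) r.
Proof. exact: ic_r3. Qed.

Lemma up_fjoin_lt f s : up f s = fjoin_lt (up f) s.
Proof. exact: ic_r4. Qed.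

Lemma lo_anti f r s : r < s -> fle (lo f s) (lo f r).
Proof. by move=> lt_rs; rewrite [lo f r]lo_fjoin_gt; apply: fjoin_gt_ub. Qed.

Lemma up_le_pcompl_lo f t : fle (up f t) (pcompl (lo f t)).
Proof. by apply: pcompl_max; rewrite fmeetC; apply: ic_r1. Qed.

Lemma up_le_fjoin_lt f s : fle (up f s) (fjoin_lt (fun t => pcompl (lo f t)) s).
Proof. by rewrite up_fjoin_lt; apply: fjoin_lt_le => t; apply: up_le_pcompl_lo. Qed.

Lemma Hbar_upE h s : inHbar h -> up h s = fjoin_lt (fun t => pcompl (lo h t)) s.
Proof.
move=> Hh; apply: fle_antisym (up_le_fjoin_lt h s) _.
by apply: fjoin_least => _ [t lt_ts ->]; case: (Hh t s lt_ts).
Qed.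

Lemma ICle_Hbar_lo h z :
  inHbar h -> (forall t, fle (lo h t) (lo z t)) -> ICle h z.
Proof.
move=> Hh le_lo; split=> // s; rewrite (Hbar_upE s Hh).
apply: fle_trans (up_le_fjoin_lt z s) _.
by apply: fjoin_lt_le => t; apply: pcompl_anti.
Qed.

Lemma Cbar_sub_Hbar f : inCbar f -> inHbar f.
Proof.
move=> Cf r s lt_rs; have f1 := Cf r s lt_rs.
by split; apply: pcompl_le_of_fjoin2; rewrite // fjoin2C.
Qed.

Section ICbarOf.
Variables A B : rat -> L.
Hypothesis AB_disjoint : forall p q, q < p -> fmeet (A p) (B q) = fbot L.

Lemma ICbar_of_r1 r s : s <= r -> fmeet (fjoin_gt A r) (fjoin_lt B s) = fbot L.
Proof.
move=> le_sr; apply: fmeet_fjoin_bot => _ [q lt_qs ->].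
rewrite fmeetC; apply: fmeet_fjoin_bot => _ [p lt_rp ->].
by rewrite fmeetC; apply: AB_disjoint; apply: lt_trans lt_qs (le_lt_trans le_sr lt_rp).
Qed.

Definition ICbar_of : ICbar L :=
  MkICbar ICbar_of_r1 (fun r => esym (fjoin_gt_idem A r))
    (fun s => esym (fjoin_lt_idem B s)).

End ICbarOf.

Section Scale.
Variable E : rat -> L.
Hypothesis E_rather_below : forall p q, p < q -> rather_below (E q) (E p).

Lemma scale_disjoint p q : q < p -> fmeet (E p) (pcompl (E q)) = fbot L.
Proof. by move=> lt_qp; apply/fmeet_pcompl_le/rather_below_le/E_rather_below. Qed.

Definition scale : ICbar L := ICbar_of scale_disjoint.

Lemma scale_Cbar : inCbar scale.
Proof.
move=> r s lt_rs; have [p lt_rp lt_ps] := ltr_dense lt_rs.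
have [q lt_rq lt_qp] := ltr_dense lt_rp.
apply: fle_antisym (ftop_max _) _; rewrite -(E_rather_below lt_qp).
apply: fjoin2_least.
- exact: fle_trans (fjoin_lt_ub _ lt_ps) (fjoin2_ub_r _ _).
- exact: fle_trans (fjoin_gt_ub _ lt_rq) (fjoin2_ub_l _ _).
Qed.

End Scale.

Lemma completely_below_scale a b m : completely_below a b ->
  exists E : rat -> L,
    [/\ forall p q, p < q -> rather_below (E q) (E p),
        forall t, fle (E t) b,
        forall t, t < m -> fle a (E t)
      & forall t, m <= t -> E t = fbot L].
Proof.
move=> [c [c0 [c1 c_rb]]].
have c_le p q : 0 <= p -> q <= 1 -> p <= q -> fle (c p) (c q).
  move=> p0 q1; rewrite le_eqVlt => /predU1P[-> | lt_pq]; first exact: fle_refl.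
  exact/rather_below_le/c_rb.
have squash_ge0 t : t < m -> 0 <= squash m t by move=> lt_tm; exact/ltW/squash_gt0.
have squash_le1 t : t < m -> squash m t <= 1 by move=> lt_tm; exact/ltW/squash_lt1.
exists (fun t => if t < m then c (squash m t) else fbot L); split.
- move=> p q lt_pq; case: ifP => lt_qm; last exact: rather_below_bot.
  have lt_pm := lt_trans lt_pq lt_qm; rewrite lt_pm.
  exact: c_rb (squash_ge0 q lt_qm) (squash_decr lt_pq lt_qm) (squash_le1 p lt_pm).
- move=> t; case: ifP => lt_tm; last exact: fbot_min.
  by rewrite -c1; apply: c_le; rewrite ?squash_ge0 ?squash_le1.
- move=> t lt_tm; rewrite lt_tm -c0.
  by apply: c_le; rewrite ?squash_ge0 ?squash_le1.
- by move=> t le_mt; rewrite ltNge le_mt.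
Qed.

Lemma Cbar_below_completely_below h r s a :
  r < s -> completely_below a (lo h s) ->
  exists2 c, inCbar c /\ ICle c h & fle a (lo c r).
Proof.
move=> lt_rs a_cb; have [m lt_rm lt_ms] := ltr_dense lt_rs.
have [E [E_rb E_le E_ge E_bot]] := completely_below_scale m a_cb.
exists (scale E_rb); first split; [exact: scale_Cbar | split=> t /= |].
- apply: fjoin_least => _ [q lt_tq ->]; case: (ltP q m) => [lt_qm | le_mq].
    exact: fle_trans (E_le q) (lo_anti h (lt_trans lt_tq (lt_trans lt_qm lt_ms))).
  by rewrite E_bot //; apply: fbot_min.
- case: (ltP m t) => [lt_mt | le_tm].
    apply: fle_trans (ftop_max _) _; rewrite -pcompl_bot -(E_bot m) //.
    exact: (fjoin_lt_ub (fun q => pcompl (E q)) lt_mt).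
  apply: (fle_trans (b := pcompl (lo h s))).
    by apply: pcompl_max; rewrite fmeetC; apply: ic_r1; apply: le_trans le_tm (ltW lt_ms).
  apply: fle_trans (pcompl_anti (E_le (t - 1))) _.
  by apply: (fjoin_lt_ub (fun q => pcompl (E q))); rewrite gtrBl.
- have [q lt_rq lt_qm] := ltr_dense lt_rm.
  exact: fle_trans (E_ge q lt_qm) (fjoin_gt_ub _ lt_rq).
Qed.

Section Join.
Variable S : ICbar L -> Prop.
Hypothesis S_Hbar : forall f, S f -> inHbar f.

Definition join_lo (t : rat) : L := fjoin (fun x => exists2 f, S f & x = lo f t).
Definition join_up : rat -> L := fjoin_lt (fun t => pcompl (join_lo t)).

Lemma join_disjoint p q :
  q < p -> fmeet (pcompl (join_up p)) (pcompl (join_lo q)) = fbot L.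
Proof. by move=> lt_qp; rewrite fmeetC; apply/fmeet_pcompl_le/fjoin_lt_ub. Qed.

Definition ICjoin : ICbar L := ICbar_of join_disjoint.

Lemma join_lo_anti q t : q < t -> fle (join_lo t) (join_lo q).
Proof.
move=> lt_qt; apply: fjoin_least => _ [f Sf ->].
by apply: fle_fjoin (lo_anti f lt_qt); exists f.
Qed.

Lemma join_lo_le_pcompl_up s t : s < t -> fle (join_lo t) (pcompl (join_up s)).
Proof.
move=> lt_st; apply: pcompl_max; apply: fmeet_fjoin_bot => _ [q lt_qs ->].
exact/fmeet_pcompl_le/join_lo_anti/(lt_trans lt_qs).
Qed.

Lemma lo_le_ICjoin f r : S f -> fle (lo f r) (lo ICjoin r).
Proof.
move=> Sf; rewrite lo_fjoin_gt; apply: fjoin_least => _ [t lt_rt ->].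
have [s lt_rs lt_st] := ltr_dense lt_rt.
have le_f : fle (lo f t) (join_lo t) by apply: fjoin_ub; exists f.
apply: fle_trans (fle_trans le_f (join_lo_le_pcompl_up lt_st)) _.
exact: (fjoin_gt_ub (fun p => pcompl (join_up p))).
Qed.

Lemma ICjoin_Hbar : inHbar ICjoin.
Proof.
move=> r s lt_rs; split; last exact: (fjoin_gt_ub (fun p => pcompl (join_up p))).
have [t lt_rt lt_ts] := ltr_dense lt_rs; have [s' lt_rs' lt_s't] := ltr_dense lt_rt.
apply: fle_trans (fjoin_lt_ub (fun t => pcompl (join_lo t)) lt_ts); apply: pcompl_anti.
apply: fle_trans (join_lo_le_pcompl_up lt_s't) _.
exact: (fjoin_gt_ub (fun p => pcompl (join_up p))).
Qed.

Lemma ICjoin_lub : is_lub_in (@ICle L) (@inHbar L) S ICjoin.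
Proof.
split; first exact: ICjoin_Hbar.
split=> [f Sf | z Hz ub].
  exact: ICle_Hbar_lo (S_Hbar Sf) (fun r => lo_le_ICjoin r Sf).
apply: ICle_Hbar_lo ICjoin_Hbar _ => r; apply: fjoin_least => _ [s lt_rs ->].
apply: fle_trans (proj2 (Hz r s lt_rs)); apply: pcompl_anti.
apply: fle_trans (up_le_fjoin_lt z s) _; apply: fjoin_lt_le => t; apply: pcompl_anti.
by apply: fjoin_least => _ [f Sf ->]; apply: (proj1 (ub f Sf)).
Qed.

End Join.

Lemma Hbar_complete : complete_lattice_on (@ICle L) (@inHbar L).
Proof. by move=> S S_Hbar; exists (ICjoin S); apply: ICjoin_lub. Qed.

Lemma ICneg_r1 f r s : s <= r -> fmeet (up f (- r)) (lo f (- s)) = fbot L.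
Proof. by move=> le_sr; rewrite fmeetC; apply: ic_r1; rewrite lerN2. Qed.

Lemma ICneg_r3 f r : up f (- r) = fjoin_gt (fun q => up f (- q)) r.
Proof. by rewrite fjoin_gt_opp -up_fjoin_lt. Qed.

Lemma ICneg_r4 f s : lo f (- s) = fjoin_lt (fun q => lo f (- q)) s.
Proof. by rewrite fjoin_lt_opp -lo_fjoin_gt. Qed.

Definition ICneg f : ICbar L :=
  @MkICbar L (fun r => up f (- r)) (fun s => lo f (- s))
    (ICneg_r1 f) (ICneg_r3 f) (ICneg_r4 f).

Lemma ICneg_Cbar f : inCbar f -> inCbar (ICneg f).
Proof. by move=> Cf r s lt_rs /=; rewrite fjoin2C; apply: Cf; rewrite ltrN2. Qed.

Lemma ICneg_Hbar f : inHbar f -> inHbar (ICneg f).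
Proof. by move=> Hf r s lt_rs /=; case: (Hf (- s) (- r)); rewrite ?ltrN2. Qed.

Lemma ICle_neg2 f g : ICle (ICneg f) (ICneg g) <-> ICle g f.
Proof.
split=> [[le_up le_lo] | [le_lo le_up]]; split=> r //=.
- by rewrite -[r]opprK; apply: le_lo.
- by rewrite -[r]opprK; apply: le_up.
Qed.

Lemma ICle_negr f g : ICle f (ICneg g) -> ICle g (ICneg f).
Proof.
move=> [le_lo le_up]; split=> r /=.
- by move: (le_up (- r)) => /=; rewrite opprK.
- by move: (le_lo (- r)) => /=; rewrite opprK.
Qed.

Lemma Cbar_join_dense h : completely_regular L -> inHbar h ->
  is_lub_in (@ICle L) (@inHbar L) (fun y => inCbar y /\ ICle y h) h.
Proof.
move=> HL Hh; split=> //; split=> [y [] // | z Hz ub].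
apply: ICle_Hbar_lo Hh _ => r; rewrite lo_fjoin_gt.
apply: fjoin_least => _ [s lt_rs ->]; rewrite (HL (lo h s)).
apply: fjoin_least => a a_cb.
have [c [Cc le_ch] le_a] := Cbar_below_completely_below lt_rs a_cb.
exact: fle_trans le_a (proj1 (ub c (conj Cc le_ch)) r).
Qed.

Lemma Cbar_meet_dense h : completely_regular L -> inHbar h ->
  is_glb_in (@ICle L) (@inHbar L) (fun y => inCbar y /\ ICle h y) h.
Proof.
move=> HL Hh; split=> //; split=> [y [] // | z Hz lb].
have [_ [_ least]] := Cbar_join_dense HL (ICneg_Hbar Hh).
apply/ICle_neg2/least => [|y [Cy le_y]]; first exact: ICneg_Hbar.
by apply/ICle_negr/lb; split; [apply: ICneg_Cbar | apply: ICle_negr].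
Qed.

End ICbarTheory.

Theorem proposition3p7 (L : frame) (HL : completely_regular L) :
  is_DM_completion (@ICle L) (@inCbar L) (@inHbar L).
Proof.
split; first exact: Cbar_sub_Hbar.
split; first exact: Hbar_complete.
by split=> h Hh; [apply: Cbar_join_dense | apply: Cbar_meet_dense].
Qed.
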